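(* Fix $\epsilon\in(0,1/4)$ and $\mathscr A=(a,b,c,d)\in\mathbb{R}^4$ with $|c|\le\epsilon$, $|d|\le\epsilon$. Then: (1) $\sigma_{\mathscr A}$ commutes with $\tau_{\mathscr A}\sigma_{\mathscr A}^{-1}\tau_{\mathscr A}^{-1}$; (2) $\sigma'_{\mathscr A}$ commutes with $\tau'^{-1}_{\mathscr A}\sigma'^{-1}_{\mathscr A}\tau'_{\mathscr A}$; (3) $\sigma_{\mathscr A}$ commutes with $\tau'_{\mathscr A}$, and $\sigma'_{\mathscr A}$ commutes with $\tau_{\mathscr A}$.
   Context: Let $p\colon\mathbb{R}^2\to\mathbb{R}^2/\mathbb{Z}^2$ be the projection, $D_\epsilon=[0,1]^2\setminus[2\epsilon,1-2\epsilon]^2$, $P_\epsilon=p(D_\epsilon)$ (a once-punctured torus) with $\omega_0=dx\wedge dy$. Hamiltonian vector fields: $\omega_0(X_H,\cdot)=-dH$; $\varphi^t_H$ is the time-$t$ flow of an autonomous $H$. $Y_c$, $Y'_d$ are compactly supported vector fields on $P_\epsilon$ with $\mathcal L_{Y_c}\omega_0=\mathcal L_{Y'_d}\omega_0=0$, $Y_c=c\,\partial_x$ at $p(x,y)$ for $(x,y)\in([-\epsilon,\epsilon]\times\mathbb{R})\cup(\mathbb{R}\times[-\epsilon,\epsilon])$, and $Y'_d=-d\,\partial_y$ on the same set. $\tau_{\mathscr A}$, $\tau'_{\mathscr A}$ are the time-one maps of $Y_c$, $Y'_d$. For $0<r\le|q|\le\epsilon$: $I_{q,r}=(\frac{q-r}2,\frac{q+r}2)$,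 $J_{q,r}=[-\frac{|q|-r}2,\frac{|q|-r}2]$; $\rho_{q,r}\colon[-\epsilon,\epsilon]\to[-1,1]$ is smooth with $\mathrm{supp}\,\rho_{q,r}\subset(-\frac{|q|+r}2,\frac{|q|+r}2)$, $\rho_{q,r}(x)+\rho_{q,r}(x+q)=q/|q|$ for $x\in I_{-q,r}$, and $\rho_{q,r}=q/|q|$ on $J_{q,r}$. $H_{q,r}$ (resp. $H'_{q,r}$) is the function on $P_\epsilon$ induced by $(x,y)\mapsto-\rho_{q,r}(x)$ for $|x|\le\epsilon$, $0$ for $\epsilon<|x|\le1/2$ (resp. the same with $y$ in place of $x$). Let $\Delta=\min\{|c|,|d|\}$ if $c\ne0\ne d$, else $\Delta=\max\{|c|,|d|\}$. Define $\sigma^t_{\mathscr A}=\varphi^{bt}_{H_{c,\Delta}}$ on $p(I_{-c,\Delta}\times\mathbb{R})$ and the identity elsewhere; $\sigma'^t_{\mathscr A}=\varphi^{at}_{H'_{d,\Delta}}$ on $p(\mathbb{R}\times I_{-d,\Delta})$ and the identity elsewhere; $\sigma_{\mathscr A}=\sigma^1_{\mathscr A}$, $\sigma'_{\mathscr A}=\sigma'^1_{\mathscr A}$. Convention: if $c=0$ the pair $(c,\Delta)$ in the definition of $\sigma_{\mathscr A}$ is replaced by $(\epsilon,\epsilon)$ (so the region is $p(I_{-\epsilon,\epsilon}\times\mathbb R)$ and the function is $H_{\epsilon,\epsilon}$), and similarly if $d=0$ for $\sigma'_{\mathscr A}$. These are compactly supported symplectomorphisms of $(P_\epsilon,\omega_0)$.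 *)

From Stdlib Require Import Reals ClassicalDescription.
From Coquelicot Require Import Coquelicot.
Open Scope R_scope.

(* Points of R^2 are pairs; the torus R^2/Z^2 is handled through lifts:
   a point of the torus is represented by any z : R*R, and maps of the torus
   by (Z^2-equivariant) maps R*R -> R*R. *)
Definition eqT (z w : R * R) : Prop :=
  exists m n : Z, fst z - fst w = IZR m /\ snd z - snd w = IZR n.

(* centred representative of x mod 1, in [-1/2, 1/2) *)
Definition cmod (x : R) : R := x - IZR (Int_part (x + / 2)).

(* the removed square p([2eps,1-2eps]^2); P_eps is its complement *)
Definition puncture (eps : R) (z : R * R) : Prop :=
  2 * eps <= frac_part (fst z) <= 1 - 2 * eps /\
  2 * eps <= frac_part (snd z) <= 1 - 2 * eps.
Definition inP (eps : R) (z : R * R) : Prop := ~ puncture eps z.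

Definition in_cross (eps : R) (z : R * R) : Prop :=
  Rabs (cmod (fst z)) <= eps \/ Rabs (cmod (snd z)) <= eps.

Definition px (f : R * R -> R) (z : R * R) : R :=
  Derive (fun x => f (x, snd z)) (fst z).
Definition py (f : R * R -> R) (z : R * R) : R :=
  Derive (fun y => f (fst z, y)) (snd z).

(* iterated partial derivatives (true = d/dx, false = d/dy) *)
Fixpoint pdiff (l : list bool) (f : R * R -> R) : R * R -> R :=
  match l with
  | nil => f
  | cons b l' => if b then px (pdiff l' f) else py (pdiff l' f)
  end.

Definition smooth2 (f : R * R -> R) : Prop :=
  forall (l : list bool) (z : R * R),
    continuous (pdiff l f) z /\
    ex_derive (fun x => pdiff l f (x, snd z)) (fst z) /\
    ex_derive (fun y => pdiff l f (fst z, y)) (snd z).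

(* Y is a smooth vector field on the torus (Z^2-periodic on R^2),
   with L_Y omega0 = 0 (i.e. divergence free, since d(i_Y omega0) =
   (dY1/dx + dY2/dy) dx^dy), and with support compact in P_eps, i.e.
   support disjoint from the removed closed square. *)
Definition sym_vf (eps : R) (Y : R * R -> R * R) : Prop :=
  smooth2 (fun z => fst (Y z)) /\ smooth2 (fun z => snd (Y z)) /\
  (forall x y, Y (x + 1, y) = Y (x, y) /\ Y (x, y + 1) = Y (x, y)) /\
  (forall z, px (fun w => fst (Y w)) z + py (fun w => snd (Y w)) z = 0) /\
  (forall z, puncture eps z -> exists delta, 0 < delta /\
     forall w, Rabs (fst w - fst z) < delta -> Rabs (snd w - snd z) < delta ->
       Y w = (0, 0)).

Definition is_flow (X : R * R -> R * R) (phi : R -> R * R -> R * R) : Prop :=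
  (forall z, phi 0 z = z) /\
  (forall t z, is_derive (fun s => phi s z) t (X (phi t z))).

Definition two_sided_inv (f g : R * R -> R * R) : Prop :=
  (forall z, f (g z) = z) /\ (forall z, g (f z) = z).

(* Hamiltonian vector field: omega0(X_H, .) = - dH with omega0 = dx^dy,
   omega0(u,v) = u1 v2 - u2 v1, gives X_H = (- dH/dy, dH/dx). *)
Definition ham_vf (H : R * R -> R) (z : R * R) : R * R :=
  (- py H z, px H z).

Definition DeltaA (c d : R) : R :=
  if Req_EM_T c 0 then Rmax (Rabs c) (Rabs d)
  else if Req_EM_T d 0 then Rmax (Rabs c) (Rabs d)
  else Rmin (Rabs c) (Rabs d).

(* the pair (q,r) used for sigma (resp. sigma'), with the convention
   (0, DeltaA) |-> (eps, eps) *)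
Definition sq (eps q : R) : R := if Req_EM_T q 0 then eps else q.
Definition sr (eps q D : R) : R := if Req_EM_T q 0 then eps else D.

(* rho_{q,r}: a smooth function [-eps,eps] -> [-1,1] with support in
   (-(|q|+r)/2, (|q|+r)/2); represented by its extension by 0 to R. *)
Definition rho_ok (q r : R) (rho : R -> R) : Prop :=
  (forall x, -1 <= rho x <= 1) /\
  (forall n x, ex_derive_n rho n x) /\
  (exists s, 0 <= s < (Rabs q + r) / 2 /\ forall x, s < Rabs x -> rho x = 0) /\
  (forall x, (- q - r) / 2 < x < (- q + r) / 2 -> rho x + rho (x + q) = q / Rabs q) /\
  (forall x, - ((Rabs q - r) / 2) <= x <= (Rabs q - r) / 2 -> rho x = q / Rabs q).

Definition Hx (eps : R) (rho : R -> R) (z : R * R) : R :=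
  if Rle_dec (Rabs (cmod (fst z))) eps then - rho (cmod (fst z)) else 0.
Definition Hy (eps : R) (rho : R -> R) (z : R * R) : R :=
  if Rle_dec (Rabs (cmod (snd z))) eps then - rho (cmod (snd z)) else 0.

Definition inI (q r x : R) : Prop := (- q - r) / 2 < x < (- q + r) / 2.

Definition sigmaA (q r b : R) (phiH : R -> R * R -> R * R) (z : R * R) : R * R :=
  if excluded_middle_informative (inI q r (cmod (fst z))) then phiH b z else z.
Definition sigmaA' (q r a : R) (phiH : R -> R * R -> R * R) (z : R * R) : R * R :=
  if excluded_middle_informative (inI q r (cmod (snd z))) then phiH a z else z.

From Stdlib Require Import Reals ClassicalDescription Lra Lia.
From Coquelicot Require Import Coquelicot.
Open Scope R_scope.

(* The proof rests on two observations.  First, sigma is the time-b map of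
   the Hamiltonian flow of a function of x alone, restricted to a vertical
   strip; such a flow is a vertical shear (x,y) |-> (x, y + g x), so sigma is
   a vertical shear whose profile g is supported in the strip; likewise
   sigma' is a horizontal shear supported in a horizontal strip.  Second,
   on the cross around the grid lines the fields Y, Y' are constant, so tau
   and tau' (and the inverse tau'^{-1}) translate the relevant strip, the
   choice of Delta guaranteeing that the translation stays in the cross.
   Conjugating a shear by a map that translates its support gives the shear
   with translated profile, and parallel shears commute; this yields (1)-(3),
   even as equalities of lifts to R^2. *)

Lemma is_derive_fst (f : R -> R * R) t l :
  is_derive f t l -> is_derive (fun s => fst (f s)) t (fst l).
Proof.
  intro Hf. unfold is_derive in *.
  apply (filterdiff_comp' f fst t _ fst Hf).
  apply filterdiff_linear, is_linear_fst.
Qed.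

Lemma is_derive_snd (f : R -> R * R) t l :
  is_derive f t l -> is_derive (fun s => snd (f s)) t (snd l).
Proof.
  intro Hf. unfold is_derive in *.
  apply (filterdiff_comp' f snd t _ snd Hf).
  apply filterdiff_linear, is_linear_snd.
Qed.

Lemma zero_derivative_between (f : R -> R) T s :
  (forall u, Rmin T s <= u <= Rmax T s -> is_derive f u 0) -> f s = f T.
Proof.
  intro Hf. destruct (Rtotal_order T s) as [Hlt | [-> | Hlt]].
  - rewrite Rmin_left, Rmax_right in Hf by lra.
    symmetry. apply (eq_is_derive f T s); auto.
  - reflexivity.
  - rewrite Rmin_right, Rmax_left in Hf by lra.
    apply (eq_is_derive f s T); auto.
Qed.

Lemma ex_derive_eps (f : R -> R) x : ex_derive f x ->
  forall e, 0 < e -> exists d, 0 < d /\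
    forall s, Rabs (s - x) < d -> Rabs (f s - f x) < e.
Proof.
  intros Hf e He. apply ex_derive_continuous, continuity_pt_filterlim in Hf.
  destruct (Hf e He) as [d [Hd Hs]]. exists d; split; auto.
  intros s Hsx. destruct (Req_dec s x) as [-> | Hne].
  - rewrite Rminus_eq_0, Rabs_R0; auto.
  - apply Hs. split; [unfold D_x, no_cond; auto | exact Hsx].
Qed.

Lemma agree_at_left_end (f g : R -> R) T :
  0 < T -> ex_derive f T -> ex_derive g T ->
  (forall s, 0 <= s < T -> f s = g s) -> f T = g T.
Proof.
  intros HT Hf Hg Heq.
  assert (Hfg : ex_derive (fun s => f s - g s) T).
  { destruct Hf as [lf Hlf], Hg as [lg Hlg].
    exists (lf - lg). apply (is_derive_minus f g); auto. }
  apply Rminus_diag_uniq, Rabs_eq_0, Rle_antisym; [| apply Rabs_pos].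
  apply Rnot_lt_le. intro Hpos.
  destruct (ex_derive_eps _ T Hfg _ Hpos) as [d [Hd Hclose]].
  pose proof (Rmax_l 0 (T - d / 2)). pose proof (Rmax_r 0 (T - d / 2)).
  assert (Rmax 0 (T - d / 2) < T) by (apply Rmax_lub_lt; lra).
  set (s := Rmax 0 (T - d / 2)) in *.
  assert (Hs : 0 <= s < T /\ Rabs (s - T) < d) by (split; [lra | apply Rabs_def1; lra]).
  specialize (Hclose s (proj2 Hs)). rewrite (Heq s (proj1 Hs)) in Hclose.
  rewrite Rminus_eq_0, Rminus_0_l, Rabs_Ropp in Hclose. lra.
Qed.

Lemma continuous_induction (P : R -> Prop) :
  P 0 ->
  (forall T, 0 < T <= 1 -> (forall s, 0 <= s < T -> P s) -> P T) ->
  (forall T, 0 <= T < 1 -> P T ->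
     exists dl, 0 < dl /\ forall s, T < s < T + dl -> P s) ->
  P 1.
Proof.
  intros P0 Hclosed Hopen.
  set (A := fun t => 0 <= t <= 1 /\ forall s, 0 <= s <= t -> P s).
  assert (A0 : A 0).
  { split; [lra |]. intros s Hs. replace s with 0 by lra. exact P0. }
  destruct (completeness A) as [T [Hub Hlub]].
  { exists 1. intros t [Ht _]. lra. }
  { exists 0. exact A0. }
  assert (T0 : 0 <= T) by (apply Hub, A0).
  assert (T1 : T <= 1) by (apply Hlub; intros t [Ht _]; lra).
  assert (Hbelow : forall s, 0 <= s < T -> P s).
  { intros s Hs. apply Classical_Prop.NNPP. intro Hns.
    assert (T <= s); [| lra].
    apply Hlub. intros t [_ Ht]. apply Rnot_lt_le. intro Hst.
    apply Hns, Ht. lra. }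
  assert (PT : P T).
  { destruct (Req_dec T 0) as [-> | HT0]; [exact P0 |].
    apply Hclosed; [lra | exact Hbelow]. }
  destruct (Req_dec T 1) as [<- | HT1]; [exact PT |].
  exfalso. destruct (Hopen T ltac:(lra) PT) as [dl [Hdl Hright]].
  set (t := Rmin 1 (T + dl / 2)).
  pose proof (Rmin_l 1 (T + dl / 2)). pose proof (Rmin_r 1 (T + dl / 2)).
  assert (Ht : T < t) by (unfold t; apply Rmin_glb_lt; lra).
  assert (At : A t).
  { split; [unfold t in *; lra |]. intros s Hs.
    destruct (Rlt_dec s T); [apply Hbelow; lra |].
    destruct (Req_dec s T) as [-> | Hne]; [exact PT |].
    apply Hright. unfold t in *; lra. }
  pose proof (Hub t At). lra.
Qed.

Definition translate (v z : R * R) : R * R := (fst z + fst v, snd z + snd v).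
Definition segment (z v : R * R) (t : R) : R * R := translate (t * fst v, t * snd v) z.

Lemma flow_fst_affine X phi z T s alpha : is_flow X phi ->
  (forall u, Rmin T s <= u <= Rmax T s -> fst (X (phi u z)) = alpha) ->
  fst (phi s z) = fst (phi T z) + (s - T) * alpha.
Proof.
  intros [_ Hder] Halpha.
  assert (Hconst : fst (phi s z) - s * alpha = fst (phi T z) - T * alpha).
  { apply (zero_derivative_between (fun u => fst (phi u z) - u * alpha)). intros u Hu.
    replace 0 with (fst (X (phi u z)) - alpha) by (rewrite Halpha; auto; ring).
    apply (is_derive_minus (fun u => fst (phi u z))).
    - apply is_derive_fst, Hder.
    - auto_derive; auto; ring. }
  lra.
Qed.

Lemma flow_snd_affine X phi z T s alpha : is_flow X phi ->
  (forall u, Rmin T s <= u <= Rmax T s -> snd (X (phi u z)) = alpha) ->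
  snd (phi s z) = snd (phi T z) + (s - T) * alpha.
Proof.
  intros [_ Hder] Halpha.
  assert (Hconst : snd (phi s z) - s * alpha = snd (phi T z) - T * alpha).
  { apply (zero_derivative_between (fun u => snd (phi u z) - u * alpha)). intros u Hu.
    replace 0 with (snd (X (phi u z)) - alpha) by (rewrite Halpha; auto; ring).
    apply (is_derive_minus (fun u => snd (phi u z))).
    - apply is_derive_snd, Hder.
    - auto_derive; auto; ring. }
  lra.
Qed.

(* The set of times up to which the trajectory follows the segment is closed
   (continuity) and open (it stays in S, where the motion is affine), so
   continuous induction applies. *)
Lemma flow_along_segment X phi (v z : R * R) (S : R * R -> Prop) :
  is_flow X phi ->
  (forall p, S p -> X p = v) ->
  (forall p, S p -> exists del, 0 < del /\ forall q,
     Rabs (fst q - fst p) < del -> Rabs (snd q - snd p) < del -> S q) ->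
  (forall t, 0 <= t <= 1 -> S (segment z v t)) ->
  phi 1 z = translate v z.
Proof.
  intros Hflow HX HS Hseg.
  pose proof Hflow as [H0 Hder].
  assert (Hcont1 : forall s, ex_derive (fun u => fst (phi u z)) s)
    by (intro s; eexists; apply is_derive_fst, Hder).
  assert (Hcont2 : forall s, ex_derive (fun u => snd (phi u z)) s)
    by (intro s; eexists; apply is_derive_snd, Hder).
  assert (Hline : forall s, ex_derive (fun u => fst z + u * fst v) s /\
                            ex_derive (fun u => snd z + u * snd v) s)
    by (intro s; split; auto_derive; auto).
  replace (translate v z) with (segment z v 1)
    by (unfold segment, translate; simpl; f_equal; f_equal; ring).
  apply (continuous_induction (fun s => phi s z = segment z v s)).
  - rewrite H0. unfold segment, translate. destruct z; simpl; f_equal; ring.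
  - intros T HT Hbelow. unfold segment, translate; simpl.
    rewrite (surjective_pairing (phi T z)). f_equal.
    + apply (agree_at_left_end (fun u => fst (phi u z))
               (fun u => fst z + u * fst v)); try apply Hline; auto; try lra.
      intros s Hs. rewrite (Hbelow s Hs). reflexivity.
    + apply (agree_at_left_end (fun u => snd (phi u z))
               (fun u => snd z + u * snd v)); try apply Hline; auto; try lra.
      intros s Hs. rewrite (Hbelow s Hs). reflexivity.
  - intros T HT HPT.
    destruct (HS _ (Hseg T ltac:(lra))) as [del [Hdel Hnear]].
    destruct (ex_derive_eps _ T (Hcont1 T) del Hdel) as [d1 [Hd1 Hc1]].
    destruct (ex_derive_eps _ T (Hcont2 T) del Hdel) as [d2 [Hd2 Hc2]].
    pose proof (Rmin_l d1 d2). pose proof (Rmin_r d1 d2).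
    exists (Rmin d1 d2). split; [apply Rmin_glb_lt; auto |].
    intros s Hs.
    assert (HXv : forall u, Rmin T s <= u <= Rmax T s -> X (phi u z) = v).
    { rewrite Rmin_left, Rmax_right by lra. intros u Hu.
      apply HX, Hnear; rewrite <- HPT.
      - apply Hc1, Rabs_def1; lra.
      - apply Hc2, Rabs_def1; lra. }
    rewrite (surjective_pairing (phi s z)).
    rewrite (flow_fst_affine _ _ z T s (fst v) Hflow)
      by (intros u Hu; rewrite HXv; auto).
    rewrite (flow_snd_affine _ _ z T s (snd v) Hflow)
      by (intros u Hu; rewrite HXv; auto).
    rewrite HPT. unfold segment, translate; simpl. f_equal; ring.
Qed.

Definition vshear (g : R -> R) (z : R * R) : R * R := (fst z, snd z + g (fst z)).
Definition hshear (g : R -> R) (z : R * R) : R * R := (fst z + g (snd z), snd z).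

Lemma ham_flow_vshear (H : R * R -> R) phi :
  (forall x y y', H (x, y) = H (x, y')) -> is_flow (ham_vf H) phi ->
  forall t z, phi t z = vshear (fun x => t * px H (x, 0)) z.
Proof.
  intros HI Hflow t z.
  assert (Hpy : forall w, py H w = 0).
  { intro w. unfold py.
    rewrite (Derive_ext _ (fun _ => H (fst w, 0))) by (intro; apply HI).
    apply Derive_const. }
  assert (Hpx : forall w, px H w = px H (fst w, 0))
    by (intro w; unfold px; apply Derive_ext; intro; apply HI).
  assert (Hfst : forall s, fst (phi s z) = fst z).
  { intro s. rewrite (flow_fst_affine _ _ z 0 s 0 Hflow).
    - rewrite (proj1 Hflow). ring.
    - intros u _. simpl. rewrite Hpy. ring. }
  rewrite (surjective_pairing (phi t z)), Hfst.
  rewrite (flow_snd_affine _ _ z 0 t (px H (fst z, 0)) Hflow).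
  - rewrite (proj1 Hflow). unfold vshear. f_equal. ring.
  - intros u _. simpl. rewrite Hpx, Hfst. reflexivity.
Qed.

Lemma ham_flow_hshear (H : R * R -> R) phi :
  (forall x x' y, H (x, y) = H (x', y)) -> is_flow (ham_vf H) phi ->
  forall t z, phi t z = hshear (fun y => - (t * py H (0, y))) z.
Proof.
  intros HI Hflow t z.
  assert (Hpx : forall w, px H w = 0).
  { intro w. unfold px.
    rewrite (Derive_ext _ (fun _ => H (0, snd w))) by (intro; apply HI).
    apply Derive_const. }
  assert (Hpy : forall w, py H w = py H (0, snd w))
    by (intro w; unfold py; apply Derive_ext; intro; apply HI).
  assert (Hsnd : forall s, snd (phi s z) = snd z).
  { intro s. rewrite (flow_snd_affine _ _ z 0 s 0 Hflow).
    - rewrite (proj1 Hflow). ring.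
    - intros u _. simpl. rewrite Hpx. reflexivity. }
  rewrite (surjective_pairing (phi t z)), Hsnd.
  rewrite (flow_fst_affine _ _ z 0 t (- py H (0, snd z)) Hflow).
  - rewrite (proj1 Hflow). unfold hshear. f_equal. ring.
  - intros u _. simpl. rewrite Hpy, Hsnd. reflexivity.
Qed.

Definition cutoff (q r : R) (g : R -> R) (x : R) : R :=
  if excluded_middle_informative (inI q r (cmod x)) then g x else 0.

Lemma cutoff_outside q r g x : ~ inI q r (cmod x) -> cutoff q r g x = 0.
Proof.
  intro Hx. unfold cutoff.
  destruct (excluded_middle_informative _); [contradiction | reflexivity].
Qed.

Lemma sigmaA_vshear q r t phi g :
  (forall z, phi t z = vshear g z) ->
  forall z, sigmaA q r t phi z = vshear (cutoff q r g) z.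
Proof.
  intros Hg z. unfold sigmaA, vshear, cutoff.
  destruct (excluded_middle_informative _).
  - apply Hg.
  - destruct z; simpl; f_equal; ring.
Qed.

Lemma sigmaA'_hshear q r t phi g :
  (forall z, phi t z = hshear g z) ->
  forall z, sigmaA' q r t phi z = hshear (cutoff q r g) z.
Proof.
  intros Hg z. unfold sigmaA', hshear, cutoff.
  destruct (excluded_middle_informative _).
  - apply Hg.
  - destruct z; simpl; f_equal; ring.
Qed.

Lemma vshear_inverse S Sinv g :
  (forall z, S z = vshear g z) -> (forall z, Sinv (S z) = z) ->
  forall z, Sinv z = vshear (fun x => - g x) z.
Proof.
  intros HS Hinv z.
  replace z with (S (vshear (fun x => - g x) z)) at 1 by
    (rewrite HS; unfold vshear; destruct z; simpl; f_equal; ring).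
  apply Hinv.
Qed.

Lemma hshear_inverse S Sinv g :
  (forall z, S z = hshear g z) -> (forall z, Sinv (S z) = z) ->
  forall z, Sinv z = hshear (fun y => - g y) z.
Proof.
  intros HS Hinv z.
  replace z with (S (hshear (fun y => - g y) z)) at 1 by
    (rewrite HS; unfold hshear; destruct z; simpl; f_equal; ring).
  apply Hinv.
Qed.

Lemma vshear_comm g k z : vshear g (vshear k z) = vshear k (vshear g z).
Proof. unfold vshear; simpl. f_equal. ring. Qed.

Lemma hshear_comm g k z : hshear g (hshear k z) = hshear k (hshear g z).
Proof. unfold hshear; simpl. f_equal. ring. Qed.

Lemma two_sided_inv_sym f g : two_sided_inv f g -> two_sided_inv g f.
Proof. intros [H1 H2]. split; assumption. Qed.

Lemma conj_vshear T Tinv S g (A : R -> Prop) v :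
  two_sided_inv T Tinv ->
  (forall z, S z = vshear g z) ->
  (forall x, ~ A x -> g x = 0) ->
  (forall w, A (fst w) -> T w = translate v w) ->
  forall z, T (S (Tinv z)) = vshear (fun x => g (x - fst v)) z.
Proof.
  intros [TTinv TinvT] HS Hsupp HT z.
  set (u := Tinv z).
  assert (Hz : z = T u) by (unfold u; rewrite TTinv; reflexivity).
  rewrite HS. destruct (Classical_Prop.classic (A (fst u))) as [Hu | Hu].
  - rewrite HT by exact Hu. rewrite Hz, (HT u Hu).
    unfold vshear, translate; simpl.
    replace (fst u + fst v - fst v) with (fst u) by ring. f_equal; ring.
  - assert (Hout : ~ A (fst z - fst v)).
    { intro Hin. apply Hu.
      assert (Hw : T (fst z - fst v, snd z - snd v) = z).
      { rewrite HT by exact Hin. unfold translate; simpl.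
        destruct z; simpl; f_equal; ring. }
      unfold u. rewrite <- Hw, TinvT. exact Hin. }
    unfold vshear. rewrite (Hsupp _ Hu), (Hsupp _ Hout), !Rplus_0_r.
    rewrite <- !surjective_pairing. apply TTinv.
Qed.

Lemma conj_hshear T Tinv S g (A : R -> Prop) v :
  two_sided_inv T Tinv ->
  (forall z, S z = hshear g z) ->
  (forall y, ~ A y -> g y = 0) ->
  (forall w, A (snd w) -> T w = translate v w) ->
  forall z, T (S (Tinv z)) = hshear (fun y => g (y - snd v)) z.
Proof.
  intros [TTinv TinvT] HS Hsupp HT z.
  set (u := Tinv z).
  assert (Hz : z = T u) by (unfold u; rewrite TTinv; reflexivity).
  rewrite HS. destruct (Classical_Prop.classic (A (snd u))) as [Hu | Hu].
  - rewrite HT by exact Hu. rewrite Hz, (HT u Hu).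
    unfold hshear, translate; simpl.
    replace (snd u + snd v - snd v) with (snd u) by ring. f_equal; ring.
  - assert (Hout : ~ A (snd z - snd v)).
    { intro Hin. apply Hu.
      assert (Hw : T (fst z - fst v, snd z - snd v) = z).
      { rewrite HT by exact Hin. unfold translate; simpl.
        destruct z; simpl; f_equal; ring. }
      unfold u. rewrite <- Hw, TinvT. exact Hin. }
    unfold hshear. rewrite (Hsupp _ Hu), (Hsupp _ Hout), !Rplus_0_r.
    rewrite <- !surjective_pairing. apply TTinv.
Qed.

Lemma vshear_commutes T Tinv S g (A : R -> Prop) e :
  two_sided_inv T Tinv ->
  (forall z, S z = vshear g z) ->
  (forall x, ~ A x -> g x = 0) ->
  (forall w, A (fst w) -> T w = translate (0, e) w) ->
  forall z, S (T z) = T (S z).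
Proof.
  intros HTinv HS Hsupp HT z.
  pose proof (conj_vshear T Tinv S g A (0, e) HTinv HS Hsupp HT (T z)) as Hconj.
  rewrite (proj2 HTinv) in Hconj. rewrite Hconj, HS.
  unfold vshear; simpl. rewrite Rminus_0_r. reflexivity.
Qed.

Lemma hshear_commutes T Tinv S g (A : R -> Prop) e :
  two_sided_inv T Tinv ->
  (forall z, S z = hshear g z) ->
  (forall y, ~ A y -> g y = 0) ->
  (forall w, A (snd w) -> T w = translate (e, 0) w) ->
  forall z, S (T z) = T (S z).
Proof.
  intros HTinv HS Hsupp HT z.
  pose proof (conj_hshear T Tinv S g A (e, 0) HTinv HS Hsupp HT (T z)) as Hconj.
  rewrite (proj2 HTinv) in Hconj. rewrite Hconj, HS.
  unfold hshear; simpl. rewrite Rminus_0_r. reflexivity.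
Qed.

Lemma Int_part_unique r (n : Z) : IZR n <= r < IZR n + 1 -> Int_part r = n.
Proof.
  intros [h1 h2]. destruct (base_Int_part r) as [b1 b2].
  assert (k1 : (Int_part r < n + 1)%Z) by (apply lt_IZR; rewrite plus_IZR; simpl; lra).
  assert (k2 : (n < Int_part r + 1)%Z) by (apply lt_IZR; rewrite plus_IZR; simpl; lra).
  lia.
Qed.

Lemma cmod_near_integer x (n : Z) : - / 2 <= x - IZR n < / 2 -> cmod x = x - IZR n.
Proof.
  intro h. unfold cmod. rewrite (Int_part_unique (x + / 2) n); auto. lra.
Qed.

Definition near_grid (eps : R) (p : R * R) : Prop :=
  (exists n : Z, Rabs (fst p - IZR n) < eps) \/
  (exists n : Z, Rabs (snd p - IZR n) < eps).

Lemma near_grid_in_cross eps p : eps < / 4 -> near_grid eps p -> in_cross eps p.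
Proof.
  intros Heps [[n Hn] | [n Hn]]; apply Rabs_def2 in Hn; [left | right];
    rewrite (cmod_near_integer _ n) by lra; apply Rabs_le; lra.
Qed.

Lemma near_integer_open eps x (n : Z) : Rabs (x - IZR n) < eps ->
  exists del, 0 < del /\ forall x', Rabs (x' - x) < del -> Rabs (x' - IZR n) < eps.
Proof.
  intro Hn. exists (eps - Rabs (x - IZR n)). split; [lra |].
  intros x' Hx'. replace (x' - IZR n) with ((x' - x) + (x - IZR n)) by ring.
  pose proof (Rabs_triang (x' - x) (x - IZR n)). lra.
Qed.

Lemma near_grid_open eps p : near_grid eps p -> exists del, 0 < del /\ forall q,
  Rabs (fst q - fst p) < del -> Rabs (snd q - snd p) < del -> near_grid eps q.
Proof.
  intros [[n Hn] | [n Hn]]; destruct (near_integer_open _ _ _ Hn) as [del [Hdel Hq]];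
    exists del; split; auto; intros q H1 H2; [left | right]; exists n; auto.
Qed.

Lemma flow_translation eps Y phi v w : eps < / 4 -> is_flow Y phi ->
  (forall z, in_cross eps z -> Y z = v) ->
  (forall t, 0 <= t <= 1 -> near_grid eps (segment w v t)) ->
  phi 1 w = translate v w.
Proof.
  intros Heps Hflow HY Hseg. apply (flow_along_segment Y phi v w (near_grid eps));
    auto using near_grid_open.
  intros p Hp. apply HY, near_grid_in_cross; auto.
Qed.

Definition strip_params (eps q0 D : R) : Prop :=
  0 < eps < / 4 /\ Rabs q0 <= eps /\ (q0 <> 0 -> D <= Rabs q0).

Lemma strip_params_c eps c d :
  0 < eps < / 4 -> Rabs c <= eps -> strip_params eps c (DeltaA c d).
Proof.
  intros Heps Hc. repeat split; try lra. intro Hc0. unfold DeltaA.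
  destruct (Req_EM_T c 0); [contradiction |].
  destruct (Req_EM_T d 0) as [-> | _]; [| apply Rmin_l].
  rewrite Rabs_R0. apply Rmax_lub; [lra | apply Rabs_pos].
Qed.

Lemma strip_params_d eps c d :
  0 < eps < / 4 -> Rabs d <= eps -> strip_params eps d (DeltaA c d).
Proof.
  intros Heps Hd. repeat split; try lra. intro Hd0. unfold DeltaA.
  destruct (Req_EM_T c 0) as [-> | _].
  - rewrite Rabs_R0. apply Rmax_lub; [apply Rabs_pos | lra].
  - destruct (Req_EM_T d 0); [contradiction | apply Rmin_r].
Qed.

(* Moving a point of the strip I_{-q0,D} by t q0, 0 <= t <= 1, keeps it
   within eps of 0: the strip is crossed inside the cross. *)
Lemma strip_crossing eps q0 D x t : strip_params eps q0 D ->
  inI (sq eps q0) (sr eps q0 D) x -> 0 <= t <= 1 -> Rabs (x + t * q0) < eps.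
Proof.
  intros [Heps [Hq HD]] HI Ht. unfold inI, sq, sr in HI.
  destruct (Req_EM_T q0 0) as [-> | Hq0].
  - apply Rabs_def1; lra.
  - specialize (HD Hq0). destruct (Rcase_abs q0) as [Hneg | Hpos].
    + rewrite (Rabs_left _ Hneg) in HD, Hq.
      assert (q0 <= t * q0 <= 0) by nra. apply Rabs_def1; lra.
    + rewrite (Rabs_right _ Hpos) in HD, Hq.
      assert (0 <= t * q0 <= q0) by nra. apply Rabs_def1; lra.
Qed.

Lemma strip_near_integer eps q0 D x t : strip_params eps q0 D ->
  inI (sq eps q0) (sr eps q0 D) (cmod x) -> 0 <= t <= 1 ->
  exists n : Z, Rabs (x + t * q0 - IZR n) < eps.
Proof.
  intros Hp HI Ht. exists (Int_part (x + / 2)).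
  replace (x + t * q0 - IZR (Int_part (x + / 2))) with (cmod x + t * q0)
    by (unfold cmod; ring).
  eapply strip_crossing; eauto.
Qed.

Section StripTranslations.

Variables (eps q0 D : R) (Y : R * R -> R * R) (phi : R -> R * R -> R * R).
Hypothesis Hstrip : strip_params eps q0 D.
Hypothesis Hflow : is_flow Y phi.

Let Heps : eps < / 4 := proj2 (proj1 Hstrip).

Lemma translation_across_vstrip w :
  (forall z, in_cross eps z -> Y z = (q0, 0)) ->
  inI (sq eps q0) (sr eps q0 D) (cmod (fst w)) -> phi 1 w = translate (q0, 0) w.
Proof.
  intros HY HI. apply (flow_translation eps Y); auto. intros t Ht. left.
  exact (strip_near_integer _ _ _ _ _ Hstrip HI Ht).
Qed.

Lemma translation_along_vstrip e w :
  (forall z, in_cross eps z -> Y z = (0, e)) ->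
  inI (sq eps q0) (sr eps q0 D) (cmod (fst w)) -> phi 1 w = translate (0, e) w.
Proof.
  intros HY HI. apply (flow_translation eps Y); auto. intros t Ht. left.
  destruct (strip_near_integer _ _ _ _ 0 Hstrip HI ltac:(lra)) as [n Hn].
  exists n. unfold segment, translate; simpl.
  replace (fst w + t * 0) with (fst w + 0 * q0) by ring. exact Hn.
Qed.

Lemma translation_along_hstrip e w :
  (forall z, in_cross eps z -> Y z = (e, 0)) ->
  inI (sq eps q0) (sr eps q0 D) (cmod (snd w)) -> phi 1 w = translate (e, 0) w.
Proof.
  intros HY HI. apply (flow_translation eps Y); auto. intros t Ht. right.
  destruct (strip_near_integer _ _ _ _ 0 Hstrip HI ltac:(lra)) as [n Hn].
  exists n. unfold segment, translate; simpl.
  replace (snd w + t * 0) with (snd w + 0 * q0) by ring. exact Hn.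
Qed.

(* The flow of (0, -q0) reaches the horizontal strip from above, so its
   inverse moves the strip across itself by q0. *)
Lemma inverse_translation_across_hstrip Tinv w :
  (forall z, in_cross eps z -> Y z = (0, - q0)) -> two_sided_inv (phi 1) Tinv ->
  inI (sq eps q0) (sr eps q0 D) (cmod (snd w)) -> Tinv w = translate (0, q0) w.
Proof.
  intros HY [_ HTinv] HI.
  assert (Hw : phi 1 (translate (0, q0) w) = w).
  { rewrite (flow_translation eps Y phi (0, - q0)); auto.
    - unfold translate; destruct w; simpl; f_equal; ring.
    - intros t Ht. right.
      destruct (strip_near_integer _ _ _ _ (1 - t) Hstrip HI ltac:(lra)) as [n Hn].
      exists n. unfold segment, translate; simpl.
      replace (snd w + q0 + t * - q0) with (snd w + (1 - t) * q0) by ring. exact Hn. }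
  rewrite <- Hw at 1. apply HTinv.
Qed.

End StripTranslations.

Lemma eqT_of_eq z w : z = w -> eqT z w.
Proof. intros ->. exists 0%Z, 0%Z. simpl. split; ring. Qed.

Theorem lemma3p2
  (eps a b c d : R)
  (Y Y' : R * R -> R * R)                    (* Y_c, Y'_d *)
  (phiY phiY' : R -> R * R -> R * R)         (* their flows *)
  (tinv tinv' : R * R -> R * R)              (* tau^{-1}, tau'^{-1} *)
  (rho rho' : R -> R)                        (* rho_{q,r} for sigma, sigma' *)
  (phiH phiH' : R -> R * R -> R * R)         (* Hamiltonian flows *)
  (sinv sinv' : R * R -> R * R) :            (* sigma^{-1}, sigma'^{-1} *)
  0 < eps < / 4 -> Rabs c <= eps -> Rabs d <= eps ->
  sym_vf eps Y -> (forall z, in_cross eps z -> Y z = pair c 0) ->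
  sym_vf eps Y' -> (forall z, in_cross eps z -> Y' z = pair 0 (- d)) ->
  is_flow Y phiY -> is_flow Y' phiY' ->
  two_sided_inv (phiY 1) tinv -> two_sided_inv (phiY' 1) tinv' ->
  rho_ok (sq eps c) (sr eps c (DeltaA c d)) rho ->
  rho_ok (sq eps d) (sr eps d (DeltaA c d)) rho' ->
  is_flow (ham_vf (Hx eps rho)) phiH ->
  is_flow (ham_vf (Hy eps rho')) phiH' ->
  two_sided_inv (sigmaA (sq eps c) (sr eps c (DeltaA c d)) b phiH) sinv ->
  two_sided_inv (sigmaA' (sq eps d) (sr eps d (DeltaA c d)) a phiH') sinv' ->
  let tau := phiY 1 in
  let tau' := phiY' 1 in
  let sigma := sigmaA (sq eps c) (sr eps c (DeltaA c d)) b phiH in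
  let sigma' := sigmaA' (sq eps d) (sr eps d (DeltaA c d)) a phiH' in
  (* (1) sigma commutes with tau sigma^{-1} tau^{-1} *)
  (forall z, inP eps z ->
     eqT (sigma (tau (sinv (tinv z)))) (tau (sinv (tinv (sigma z))))) /\
  (* (2) sigma' commutes with tau'^{-1} sigma'^{-1} tau' *)
  (forall z, inP eps z ->
     eqT (sigma' (tinv' (sinv' (tau' z)))) (tinv' (sinv' (tau' (sigma' z))))) /\
  (* (3) sigma commutes with tau', sigma' commutes with tau *)
  (forall z, inP eps z -> eqT (sigma (tau' z)) (tau' (sigma z))) /\
  (forall z, inP eps z -> eqT (sigma' (tau z)) (tau (sigma' z))).
Proof.
  intros Heps Hc Hd _ HY _ HY' FY FY' Htau Htau' _ _ FH FH' Hsigma Hsigma'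
    tau tau' sigma sigma'.
  pose proof (strip_params_c eps c d Heps Hc) as Pc.
  pose proof (strip_params_d eps c d Heps Hd) as Pd.
  set (q := sq eps c). set (r := sr eps c (DeltaA c d)).
  set (q' := sq eps d). set (r' := sr eps d (DeltaA c d)).
  set (g := cutoff q r (fun x => b * px (Hx eps rho) (x, 0))).
  set (h := cutoff q' r' (fun y => - (a * py (Hy eps rho') (0, y)))).
  assert (Sg : forall z, sigma z = vshear g z).
  { apply sigmaA_vshear, ham_flow_vshear; auto. }
  assert (Sh : forall z, sigma' z = hshear h z).
  { apply sigmaA'_hshear, ham_flow_hshear; auto. }
  pose proof (vshear_inverse _ _ _ Sg (proj2 Hsigma)) as Sinv.
  pose proof (hshear_inverse _ _ _ Sh (proj2 Hsigma')) as Sinv'.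
  assert (g0 : forall x, ~ inI q r (cmod x) -> g x = 0) by apply cutoff_outside.
  assert (h0 : forall y, ~ inI q' r' (cmod y) -> h y = 0) by apply cutoff_outside.
  split; [| split; [| split]]; intros z _; apply eqT_of_eq.
  (* (1): tau translates the strip by c, so tau sigma^{-1} tau^{-1} is a shear *)
  - assert (Hconj : forall w, tau (sinv (tinv w)) = vshear (fun x => - g (x - c)) w).
    { apply (conj_vshear _ _ _ _ (fun x => inI q r (cmod x)) (c, 0) Htau Sinv).
      - intros x Hx. rewrite g0 by exact Hx. apply Ropp_0.
      - intros w Hw. exact (translation_across_vstrip _ _ _ _ _ Pc FY w HY Hw). }
    rewrite !Hconj, !Sg. apply vshear_comm.
  (* (2): tau'^{-1} translates the horizontal strip by d *)
  - assert (Hconj : forall w, tinv' (sinv' (tau' w)) = hshear (fun y => - h (y - d)) w).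
    { apply (conj_hshear _ _ _ _ (fun y => inI q' r' (cmod y)) (0, d)
               (two_sided_inv_sym _ _ Htau') Sinv').
      - intros y Hy. rewrite h0 by exact Hy. apply Ropp_0.
      - intros w Hw.
        exact (inverse_translation_across_hstrip _ _ _ _ _ Pd FY' _ w HY' Htau' Hw). }
    rewrite !Hconj, !Sh. apply hshear_comm.
  (* (3): tau' and tau translate the strips along themselves *)
  - apply (vshear_commutes tau' tinv' sigma g (fun x => inI q r (cmod x)) (- d) Htau' Sg g0).
    intros w Hw. exact (translation_along_vstrip _ _ _ _ _ Pc FY' _ w HY' Hw).
  - apply (hshear_commutes tau tinv sigma' h (fun y => inI q' r' (cmod y)) c Htau Sh h0).
    intros w Hw. exact (translation_along_hstrip _ _ _ _ _ Pd FY _ w HY Hw).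
Qed.
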